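(* Let $D$ be a strongly connected digraph with girth $g$ (having at least one cycle), $T$ a DFS tree of $D$ rooted at $r$, and $G$ the condensation graph of $D$ relative to $T$. Then $\chi_A(D)\le \chi(G)$.
   Context: Digraphs are finite and loopless; paths and cycles are directed; $l(\cdot)$ denotes length. Girth is the length of a shortest directed cycle. A DFS tree $T$ of a strongly connected digraph $D$ rooted at $r$ is the spanning out-branching produced by a depth-first search started at $r$. $P_u$ is the unique $ru$-path in $T$; the length $t$ of $T$ is the length of a longest path in $T$; the levels are $V_i=\{u: l(P_u)=i\}$, $0\le i\le t$. An arc $(u,v)$ is a backward arc if $T$ contains a $vu$-path. Let $k=\lceil\frac{t+1}{g-1}\rceil$ and $U_h=\bigcup_{j=0}^{g-2}V_{h(g-1)+j}$ for $h\in\{0,\ldots,k-1\}$, with $V_m=\emptyset$ for $m>t$. The condensation graph $G$ of $D$ relative to $T$ has vertex set $\{U_0,\ldots,U_{k-1}\}$, and for $i>j$, $U_iU_j$ is an edge iff there is a backward arc $(u,v)$ with $u\in U_i$ and $v\in U_j$. $\chi$ is the chromatic number; $\chi_A$ is the minimum number of colors in a vertex coloring whose color classes induce no directed cycle. *)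

From mathcomp Require Import all_boot.
Set Implicit Arguments. Unset Strict Implicit. Unset Printing Implicit Defensive.

Section Digraphs.
Variable V : finType.

(* A digraph on V is an arc relation e : rel V (finite; looplessness is a
   separate hypothesis [irreflexive e]). *)

Definition strongly_connected (e : rel V) : Prop := forall x y, connect e x y.

Definition dcycle (e : rel V) (c : seq V) : Prop :=
  [/\ c != [::], uniq c & cycle e c].

Definition is_girth (e : rel V) (g : nat) : Prop :=
  (exists2 c, dcycle e c & size c = g) /\
  (forall c, dcycle e c -> g <= size c).

(* Nondeterministic depth-first search.  [dfs_visit e u S S' A]: while
   visiting u with current visited set S, the search ends with visited set S'
   and produces the tree arcs A (in discovery order). *)
Inductive dfs_visit (e : rel V) : V -> {set V} -> {set V} -> seq (V * V) -> Prop :=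
| dfs_done u (S : {set V}) : (forall v, e u v -> v \in S) -> dfs_visit e u S S [::]
| dfs_step u v (S S1 S2 : {set V}) (A1 A2 : seq (V * V)) :
    e u v -> v \notin S ->
    dfs_visit e v (v |: S) S1 A1 ->
    dfs_visit e u S1 S2 A2 ->
    dfs_visit e u S S2 ((u, v) :: A1 ++ A2).

Definition dfs_tree (e : rel V) (r : V) (A : seq (V * V)) : Prop :=
  exists S, dfs_visit e r [set r] S A.

Definition tarc (A : seq (V * V)) : rel V := fun x y => (x, y) \in A.

Definition tdepth (A : seq (V * V)) (r u : V) (d : nat) : Prop :=
  exists p, [/\ path (tarc A) r p, last r p = u & size p = d].

Definition tree_length (A : seq (V * V)) (r : V) (t : nat) : Prop :=
  (exists u, tdepth A r u t) /\ (forall u d, tdepth A r u d -> d <= t).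

(* u \in U_h, where U_h is the union of the levels V_{h(g-1)},...,V_{h(g-1)+g-2}. *)
Definition inU (A : seq (V * V)) (r : V) (g : nat) (u : V) (h : nat) : Prop :=
  exists2 d, tdepth A r u d & d %/ (g - 1) = h.

Definition backward (e : rel V) (A : seq (V * V)) (u v : V) : Prop :=
  e u v /\ connect (tarc A) v u.

(* Acyclic colouring with n colours: no colour class contains (hence induces)
   a directed cycle. *)
Definition acyc_colorable (e : rel V) (n : nat) : Prop :=
  exists f : V -> 'I_n, forall c, dcycle e c -> exists x y, [/\ x \in c, y \in c & f x != f y].

Definition is_chiA (e : rel V) (n : nat) : Prop :=
  acyc_colorable e n /\ forall m, acyc_colorable e m -> n <= m.

End Digraphs.

Definition ceil_div (a b : nat) : nat := (a + b - 1) %/ b.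

Definition cond_k (g t : nat) : nat := ceil_div t.+1 (g - 1).

(* Adjacency of the condensation graph G on vertex set {U_0..U_{k-1}} = 'I_k:
   for i > j, U_i U_j is an edge iff there is a backward arc from U_i to U_j
   (made symmetric, as G is an undirected graph). *)
Definition cond_edge (V : finType) (e : rel V) (A : seq (V * V)) (r : V) (g : nat)
  (i j : nat) : Prop :=
  j < i /\ exists u v, [/\ backward e A u v, inU A r g u i & inU A r g v j].

Definition cond_adj (V : finType) (e : rel V) (A : seq (V * V)) (r : V) (g t : nat)
  (i j : 'I_(cond_k g t)) : Prop :=
  cond_edge e A r g i j \/ cond_edge e A r g j i.

Definition colorable (W : finType) (adj : W -> W -> Prop) (n : nat) : Prop :=
  exists f : W -> 'I_n, forall x y, adj x y -> f x != f y.

Definition is_chi (W : finType) (adj : W -> W -> Prop) (n : nat) : Prop :=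
  colorable adj n /\ forall m, colorable adj m -> n <= m.

Arguments cond_adj {V} e A r g t i j.

From mathcomp Require Import all_boot.
Set Implicit Arguments. Unset Strict Implicit. Unset Printing Implicit Defensive.

(* Colour each vertex by the colour, in a proper colouring of G, of the block
   U_h containing it.  Every directed cycle of D leaves the subtree in which
   the DFS entered it, so it contains a backward arc (x, y) with y an ancestor
   of x.  The tree path from y to x closed by that arc is a directed cycle,
   hence has length at least g: the depths of x and y differ by at least g - 1,
   so x and y lie in distinct blocks U_i, U_j with i > j.  These blocks are
   adjacent in G, so x and y receive distinct colours and no colour class
   contains the cycle. *)

Section Crossing.
Variables (T : eqType) (e : rel T) (P : pred T).

Lemma path_crossing x p : path e x p -> P x -> has (predC P) p ->
  exists a b, [/\ e a b, a \in x :: p, b \in p, P a & ~~ P b].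
Proof.
elim: p x => [|z p IH] x //= /andP[exz pz] Px /orP[Pz|Pp].
  by exists x, z; rewrite !inE !eqxx.
have [Pz | nPz] := boolP (P z); last by exists x, z; rewrite !inE !eqxx.
have [a [b [eab ain bin Pa nPb]]] := IH z pz Pz Pp.
exists a, b; split => //; last by rewrite inE bin orbT.
by move: ain; rewrite !inE => /orP[/eqP->|->]; rewrite ?eqxx !orbT.
Qed.

Lemma cycle_crossing c a b : cycle e c -> a \in c -> b \in c -> P a -> ~~ P b ->
  exists x y, [/\ e x y, x \in c, y \in c, P x & ~~ P y].
Proof.
move=> cyc ac bc Pa nPb; case: (rot_to ac) => i s rot_c.
have a_path : path e a (rcons s a) by rewrite -(rot_cycle i) rot_c in cyc.
have mem_c z : (z \in c) = (z \in a :: s) by rewrite -(mem_rot i) rot_c.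
have has_nP : has (predC P) (rcons s a) by apply/hasP; exists b; rewrite ?mem_rcons -?mem_c.
have [x [y [exy xin yin Px nPy]]] := path_crossing a_path Pa has_nP.
exists x, y; rewrite !mem_c -!(mem_rcons s a) yin; split => //.
by move: xin; rewrite inE => /orP[/eqP->|//]; rewrite mem_rcons mem_head.
Qed.

End Crossing.

Lemma map_uniq_inj_in (T U : eqType) (f : T -> U) s x y :
  uniq (map f s) -> x \in s -> y \in s -> f x = f y -> x = y.
Proof.
elim: s => [//|z s IH] /= /andP[fz_s us]; rewrite !inE.
move=> /orP[/eqP->|xs] /orP[/eqP->|ys] // fxy.
- by move: fz_s; rewrite fxy map_f.
- by move: fz_s; rewrite -fxy map_f.
- exact: IH.
Qed.

Lemma source_path_uniq (T : eqType) (R : rel T) r :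
  (forall a, ~~ R a r) -> (forall a a' b, R a b -> R a' b -> a = a') ->
  forall p q, path R r p -> path R r q -> last r p = last r q -> p = q.
Proof.
move=> no_in parent_uniq p; elim/last_ind: p => [|p z IH] q; case/lastP: q => [|q z'] //.
- by rewrite rcons_path last_rcons /= => _ /andP[_ Rr] rz; rewrite -rz (negbTE (no_in _)) in Rr.
- by rewrite rcons_path last_rcons /= => /andP[_ Rr] _ zr; rewrite zr (negbTE (no_in _)) in Rr.
rewrite !rcons_path !last_rcons => /andP[pp Rz] /andP[pq Rz'] zz'; subst z'.
by rewrite (IH q pp pq (parent_uniq _ _ _ Rz Rz')).
Qed.

Lemma girth_gt1 (V : finType) (e : rel V) g : irreflexive e -> is_girth e g -> 1 < g.
Proof.
move=> irr [[[|a [|z p]] [c_nil _ cyc] <-] _] //.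
by move: cyc; rewrite /cycle /= irr.
Qed.

Section DepthFirstSearch.
Variables (V : finType) (e : rel V).

Lemma dfs_visit_subset u S S' A : dfs_visit e u S S' A -> S \subset S'.
Proof.
elim=> // {}u v {}S S1 S2 A1 A2 _ _ _ sub1 _ sub2.
exact: subset_trans (subsetUr _ _) (subset_trans sub1 sub2).
Qed.

Lemma dfs_visit_arc u S S' A a b :
  dfs_visit e u S S' A -> (a, b) \in A -> e a b /\ b \in S' :\: S.
Proof.
move=> visit; elim: visit a b => [//|{}u v {}S S1 S2 A1 A2 euv vS v1 IH1 v2 IH2] a b.
have sub1 := dfs_visit_subset v1; have sub2 := dfs_visit_subset v2.
rewrite inE mem_cat => /orP[/eqP[-> ->]|/orP[ab1|ab2]].
- by rewrite !inE vS (subsetP sub2) // (subsetP sub1) ?setU11.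
- have [eab] := IH1 _ _ ab1; rewrite !inE => /andP[/norP[_ bS] b1].
  by rewrite bS (subsetP sub2).
- have [eab] := IH2 _ _ ab2; rewrite !inE => /andP[b1 ->]; split => //.
  by rewrite andbT; apply: contra b1 => bS; rewrite (subsetP sub1) // inE bS orbT.
Qed.

Lemma dfs_visit_uniq_heads u S S' A : dfs_visit e u S S' A -> uniq (map snd A).
Proof.
elim=> // {}u v {}S S1 S2 A1 A2 _ vS v1 u1 v2 u2.
have head1 b : b \in map snd A1 -> b \in S1 :\: (v |: S).
  by case/mapP=> -[a' b'] /(dfs_visit_arc v1)[_ ?] ->.
have head2 b : b \in map snd A2 -> b \in S2 :\: S1.
  by case/mapP=> -[a' b'] /(dfs_visit_arc v2)[_ ?] ->.
have vS1 : v \in S1 by rewrite (subsetP (dfs_visit_subset v1)) ?setU11.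
rewrite /= map_cat cat_uniq u1 u2 mem_cat /= andbT; apply/andP; split.
- by apply/norP; split; apply/negP; [move/head1 | move/head2]; rewrite !inE ?eqxx ?vS1.
- apply/hasP => -[b /head2]; rewrite inE => /andP[/negbTE b1 _] /head1.
  by rewrite inE b1 andbF.
Qed.

Lemma connect_tarc_sub (A B : seq (V * V)) x y :
  {subset A <= B} -> connect (tarc A) x y -> connect (tarc B) x y.
Proof. by move=> sAB; apply: connect_sub => a b ab; apply/connect1/sAB. Qed.

Lemma dfs_visit_reach u S S' A x :
  dfs_visit e u S S' A -> x \in S' :\: S -> connect (tarc A) u x.
Proof.
move=> visit; elim: visit x => [{}u {}S _|{}u v {}S S1 S2 A1 A2 _ _ v1 IH1 v2 IH2] x.
  by rewrite setDv inE.
have sub1 : {subset A1 <= (u, v) :: A1 ++ A2} by move=> a a1; rewrite inE mem_cat a1 orbT.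
have sub2 : {subset A2 <= (u, v) :: A1 ++ A2} by move=> a a2; rewrite inE mem_cat a2 !orbT.
have uv : tarc ((u, v) :: A1 ++ A2) u v by rewrite /tarc mem_head.
rewrite inE => /andP[xS x2]; have [x1 | x1] := boolP (x \in S1).
- have [->|xv] := eqVneq x v; first exact: connect1.
  apply: connect_trans (connect1 uv) (connect_tarc_sub sub1 (IH1 _ _)).
  by rewrite !inE negb_or xv xS x1.
- by apply: connect_tarc_sub sub2 (IH2 _ _); rewrite inE x1 x2.
Qed.

Lemma dfs_visit_closed u S S' A x y :
  dfs_visit e u S S' A -> (x \in S' :\: S) || (x == u) -> e x y -> y \in S'.
Proof.
move=> visit; elim: visit x y => [{}u {}S out_u|{}u v {}S S1 S2 A1 A2 _ _ v1 IH1 v2 IH2] x y.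
  by rewrite setDv inE => /eqP-> /out_u.
have [x2 _ | x2 x_new] := boolP ((x \in S2 :\: S1) || (x == u)); first exact: IH2.
move=> exy; rewrite (subsetP (dfs_visit_subset v2)) // (IH1 x) //.
by move: x_new x2; rewrite !inE; case: (x \in S1); case: (x == v); case: (x \in S);
  case: (x \in S2); case: (x == u).
Qed.

Lemma dfs_visit_backward u S S' A c :
  dfs_visit e u S S' A -> cycle e c -> c != [::] ->
  (forall x, x \in c -> (x \in S' :\: S) || (x == u)) ->
  exists x y, [/\ x \in c, y \in c, e x y & connect (tarc A) y x].
Proof.
move=> visit; elim: visit c => [{}u {}S _|{}u v {}S S1 S2 A1 A2 euv vS v1 IH1 v2 IH2] c cyc c_nil c_sub.
  case: c cyc c_nil c_sub => [//|a p] cyc _ c_sub.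
  have c_u z : z \in a :: p -> z = u by move/c_sub; rewrite setDv inE => /eqP.
  exists a, a; rewrite mem_head connect0; split => //.
  move: cyc; rewrite /cycle rcons_path => /andP[_].
  by rewrite (c_u _ (mem_last a p)) (c_u a (mem_head a p)).
have visit := dfs_step euv vS v1 v2.
have sub1 : {subset A1 <= (u, v) :: A1 ++ A2} by move=> a a1; rewrite inE mem_cat a1 orbT.
have sub2 : {subset A2 <= (u, v) :: A1 ++ A2} by move=> a a2; rewrite inE mem_cat a2 !orbT.
pose P := [pred x | x \in S1 :\: S].
have [c_all1 | c_not1] := boolP (all P c).
  have c_sub1 x : x \in c -> (x \in S1 :\: (v |: S)) || (x == v).
    by move/(allP c_all1); rewrite !inE; case: (x \in S1); case: (x == v); case: (x \in S).
  have [x [y [xc yc exy yx]]] := IH1 c cyc c_nil c_sub1.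
  by exists x, y; split => //; apply: connect_tarc_sub sub1 yx.
have [c_some1 | c_none1] := boolP (has P c).
  (* The arc by which c leaves the vertices discovered below v ends in S1, and
     the only vertex of c in S1 that was not discovered below v is u. *)
  have [a ac Pa] := hasP c_some1; have [b bc nPb] := allPn c_not1.
  have [x [y [exy xc yc Px nPy]]] := cycle_crossing cyc ac bc Pa nPb.
  have /andP[xS x1] : (x \notin S) && (x \in S1) by rewrite -in_setD.
  have y1 : y \in S1.
    by apply: (dfs_visit_closed v1 _ exy); rewrite !inE x1 (negbTE xS) orbF andbT orNb.
  have /eqP yu : y == u.
    by move: (c_sub y yc) nPy; rewrite !inE y1 /=; case: (y \in S); case: (y == u).
  exists x, y; split => //; rewrite yu; apply: dfs_visit_reach visit _.
  by rewrite inE (subsetP (dfs_visit_subset v2)) ?xS.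
have c_sub2 x : x \in c -> (x \in S2 :\: S1) || (x == u).
  move=> xc; move: (c_sub x xc) (hasPn c_none1 x xc); rewrite !inE.
  by case: (x \in S1); case: (x \in S2); case: (x == u); case: (x \in S).
have [x [y [xc yc exy yx]]] := IH2 c cyc c_nil c_sub2.
by exists x, y; split => //; apply: connect_tarc_sub sub2 yx.
Qed.

End DepthFirstSearch.

Section DepthFirstSearchTree.
Variables (V : finType) (e : rel V) (r : V) (S : {set V}) (A : seq (V * V)).
Hypothesis visit : dfs_visit e r [set r] S A.

Lemma dfs_tree_path_uniq p q :
  path (tarc A) r p -> path (tarc A) r q -> last r p = last r q -> p = q.
Proof.
apply: source_path_uniq => [a | a a' b ab a'b].
  by apply/negP => /(dfs_visit_arc visit)[_]; rewrite !inE eqxx.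
by case: (map_uniq_inj_in (dfs_visit_uniq_heads visit) ab a'b erefl).
Qed.

Lemma tdepth_uniq u d1 d2 : tdepth A r u d1 -> tdepth A r u d2 -> d1 = d2.
Proof.
move=> [p [rp p_u <-]] [q [rq q_u <-]].
by rewrite (dfs_tree_path_uniq rp rq) // p_u q_u.
Qed.

Lemma backward_depth_gap g x y dx dy :
  is_girth e g -> e x y -> connect (tarc A) y x ->
  tdepth A r y dy -> tdepth A r x dx -> dy + (g - 1) <= dx.
Proof.
move=> [_ girth_min] exy /connectP[p yp xE] [q [rq q_y <-]] x_dx.
case: (shortenP yp) xE => p' yp' uniq_p' _ xE.
have ep' : path e y p' by apply: sub_path yp' => a b /(dfs_visit_arc visit)[].
have /girth_min /= : dcycle e (y :: p') by split => //; rewrite /cycle rcons_path ep' -xE exy.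
have -> : dx = size q + size p'.
  apply: tdepth_uniq x_dx _; exists (q ++ p').
  by rewrite cat_path rq q_y yp' last_cat q_y -xE size_cat.
by rewrite leq_add2l leq_subLR add1n.
Qed.

Hypothesis sc : strongly_connected e.

Lemma dfs_tree_covers y : y \in S.
Proof.
have rS : r \in S by rewrite (subsetP (dfs_visit_subset visit)) ?set11.
have last_in x p : x \in S -> path e x p -> last x p \in S.
  elim: p x => [//|z p IH] x xS /= /andP[exz ep]; apply: IH ep.
  by apply: dfs_visit_closed visit _ exz; rewrite !inE xS andbT orNb.
by have /connectP[p ep ->] := sc r y; apply: last_in.
Qed.

Lemma dfs_tree_depth : exists dep : V -> nat, forall y, tdepth A r y (dep y).
Proof.
apply: fin_all_exists => y; have [->|yr] := eqVneq y r; first by exists 0, [::].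
have /connectP[p rp ->] : connect (tarc A) r y.
  by apply: dfs_visit_reach visit _; rewrite !inE yr dfs_tree_covers.
by exists (size p), p.
Qed.

Lemma dfs_tree_cycle_backward c :
  dcycle e c -> exists x y, [/\ x \in c, y \in c, e x y & connect (tarc A) y x].
Proof.
case=> c_nil _ cyc; apply: dfs_visit_backward visit cyc c_nil _ => x _.
by rewrite !inE dfs_tree_covers andbT orNb.
Qed.

End DepthFirstSearchTree.

Lemma ltn_div_gap b m n : 0 < b -> m + b <= n -> m %/ b < n %/ b.
Proof.
move=> b_gt0 le_mn; apply: leq_trans (leq_div2r b le_mn).
by rewrite -[X in m + X]mul1n divnDMl // addn1.
Qed.

Lemma ltn_div_ceil b d t : 0 < b -> d <= t -> d %/ b < ceil_div t.+1 b.
Proof.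
move=> b_gt0 le_dt; rewrite /ceil_div addSn subn1 /= -[X in t + X]mul1n divnDMl //.
by rewrite addn1 ltnS leq_div2r.
Qed.

Theorem mainTheorem18 (V : finType) (e : rel V) (r : V) (A : seq (V * V)) (g t : nat) :
  irreflexive e ->
  strongly_connected e ->
  is_girth e g ->
  dfs_tree e r A ->
  tree_length A r t ->
  forall chiA chiG : nat,
    is_chiA e chiA ->
    is_chi (cond_adj e A r g t) chiG ->
    chiA <= chiG.
Proof.
move=> irr sc girth [S visit] [_ depth_le_t] chiA chiG [_ chiA_min] [[f f_proper] _].
apply: chiA_min.
have b_gt0 : 0 < g - 1 by rewrite subn_gt0 (girth_gt1 irr girth).
have [dep depP] := dfs_tree_depth visit sc.
have lev_lt y : dep y %/ (g - 1) < cond_k g t.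
  exact: ltn_div_ceil b_gt0 (depth_le_t _ _ (depP y)).
pose lev y : 'I_(cond_k g t) := Ordinal (lev_lt y).
exists (fun y => f (lev y)) => c cyc.
have [x [y [xc yc exy yx]]] := dfs_tree_cycle_backward visit sc cyc.
exists x, y; split => //; apply: f_proper; left; split.
  exact: ltn_div_gap b_gt0 (backward_depth_gap visit girth exy yx (depP y) (depP x)).
by exists x, y; split; [| exists (dep x) | exists (dep y)].
Qed.
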